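(* The bound of Corollary 9 is optimal: there exist $n$-qubit unitary stabilizer circuits such that every equivalent unitary stabilizer circuit has $\Omega(n^2/\log n)$ gates.
   Context: A unitary stabilizer circuit is a circuit consisting only of CNOT, Hadamard and phase ($\mathrm{diag}(1,i)$) gates, each gate acting on specified qubits among $n$. Two such circuits are equivalent if the unitaries they implement agree up to a global phase. Corollary 9 states that every $n$-qubit unitary stabilizer circuit has an equivalent one with $O(n^2/\log n)$ gates. *)

From HB Require Import structures.
From mathcomp Require Import all_boot all_order all_algebra all_field.
Set Implicit Arguments. Unset Strict Implicit. Unset Printing Implicit Defensive.
Import Order.TTheory GRing.Theory Num.Theory.
Local Open Scope ring_scope.

(* Computational basis of n qubits: basis states indexed by 'I_(2^n);
   qubit k of basis index i is bit k of i (little endian). *)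
Definition qbit (n : nat) (i : 'I_(2 ^ n)) (k : 'I_n) : bool :=
  odd (i %/ 2 ^ k).

Inductive gate (n : nat) : Type :=
| CNOT of 'I_n & 'I_n   (* control, target *)
| Had of 'I_n
| Phase of 'I_n.

Definition gate_wf (n : nat) (g : gate n) : bool :=
  if g is CNOT a b then a != b else true.

Definition circuit (n : nat) := seq (gate n).

Definition circuit_wf (n : nat) (C : circuit n) : bool := all (@gate_wf n) C.

Definition gate_mx (n : nat) (g : gate n) : 'M[algC]_(2 ^ n) :=
  match g with
  | CNOT a b => \matrix_(r, c)
      (if [forall k, qbit r k == (if k == b then qbit c b (+) qbit c a
                                  else qbit c k)] then 1 else 0)
  | Had a => \matrix_(r, c)
      (if [forall k, (k != a) ==> (qbit r k == qbit c k)]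
       then (sqrtC 2)^-1 * (if qbit r a && qbit c a then -1 else 1)
       else 0)
  | Phase a => \matrix_(r, c)
      (if r == c then (if qbit r a then 'i else 1) else 0)
  end.

(* Unitary implemented by a circuit: gates applied in sequence order,
   the first gate of the list is applied first. *)
Definition circuit_mx (n : nat) (C : circuit n) : 'M[algC]_(2 ^ n) :=
  foldl (fun U g => gate_mx g *m U) 1%:M C.

Definition equiv_circ (n : nat) (C D : circuit n) : Prop :=
  exists z : algC, `|z| = 1 /\ circuit_mx C = z *: circuit_mx D.

From HB Require Import structures.
From mathcomp Require Import all_boot all_order all_algebra all_field.
From mathcomp Require Import zify lra.
From Stdlib Require Import Classical ClassicalEpsilon.
Import Order.TTheory GRing.Theory Num.Theory.
Set Implicit Arguments. Unset Strict Implicit. Unset Printing Implicit Defensive.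

(* A counting argument.  With m = n/2, each of the 2^(m^2) bipartite
   patterns B on the qubits x_1..x_m, y_1..y_m gives the CNOT circuit that
   adds x_i into y_j for every (i, j) in B; it acts on basis states by a
   permutation, and distinct patterns give permutations that differ even up
   to a global phase.  A circuit with s gates is described by 2s symbols
   from an alphabet of (n+1)^2 letters, so some pattern needs
   2 s log(n+1) >= m^2 for every equivalent circuit, i.e. s = Omega(n^2/log n). *)

Notation bitvec n := {ffun 'I_n -> bool}.

Lemma eq_from_bits n i j : (i < 2 ^ n)%N -> (j < 2 ^ n)%N ->
  (forall k, (k < n)%N -> odd (i %/ 2 ^ k) = odd (j %/ 2 ^ k)) -> i = j.
Proof.
elim: n i j => [|n IH] i j; first by rewrite !ltnS !leqn0 => /eqP-> /eqP->.
move=> lt_i lt_j eq_ij.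
have half_eq : i./2 = j./2.
  apply: IH; rewrite -?divn2 ?ltn_divLR -?expnSr // => k lt_kn.
  by have := eq_ij k.+1 lt_kn; rewrite -!divnMA -expnS.
have := eq_ij 0%N isT; rewrite !divn1 => odd_eq.
by rewrite -(odd_double_half i) -(odd_double_half j) odd_eq half_eq.
Qed.

Definition bits n (i : 'I_(2 ^ n)) : bitvec n := [ffun k => qbit i k].

Lemma bits_inj n : injective (@bits n).
Proof.
move=> i j /ffunP eq_ij; apply/ord_inj/(@eq_from_bits n) => // k lt_kn.
by have := eq_ij (Ordinal lt_kn); rewrite !ffunE.
Qed.

Lemma bits_onto n (v : bitvec n) : exists i, bits i = v.
Proof.
have /codomP[i ->] : v \in codom (@bits n).
  by apply: inj_card_onto (@bits_inj n) _ _; rewrite card_ffun card_bool !card_ord.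
by exists i.
Qed.

Local Open Scope ring_scope.

Definition basis_mx n (F : bitvec n -> bitvec n) : 'M[algC]_(2 ^ n) :=
  \matrix_(r, c) (bits r == F (bits c))%:R.

Lemma basis_mxM n (F G : bitvec n -> bitvec n) :
  basis_mx G *m basis_mx F = basis_mx (G \o F).
Proof.
apply/matrixP=> r c; rewrite !mxE.
have [k bits_k] := bits_onto (F (bits c)).
rewrite (bigD1 k) //= !mxE bits_k eqxx mulr1 big1 ?addr0 // => l ne_lk.
by rewrite !mxE -bits_k (inj_eq (@bits_inj n)) (negbTE ne_lk) mulr0.
Qed.

Lemma basis_mx_id n : basis_mx (@id (bitvec n)) = 1%:M.
Proof. by apply/matrixP=> r c; rewrite !mxE (inj_eq (@bits_inj n)). Qed.

Lemma basis_mx_scale_inj n (F G : bitvec n -> bitvec n) (z : algC) :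
  basis_mx F = z *: basis_mx G -> F =1 G.
Proof.
move=> eqFG v; have [c <-] := bits_onto v; apply/eqP/contraT => neFG.
have [r bits_r] := bits_onto (F (bits c)).
have := congr1 (fun M : 'M_(2 ^ n) => M r c) eqFG.
by rewrite !mxE bits_r eqxx (negbTE neFG) mulr0 => /eqP; rewrite oner_eq0.
Qed.

Lemma equiv_circ_sym n (C D : circuit n) : equiv_circ C D -> equiv_circ D C.
Proof.
move=> [z [norm_z eqCD]]; have z_neq0 : z != 0 by rewrite -normr_eq0 norm_z oner_eq0.
by exists z^-1; rewrite normfV norm_z invr1 eqCD scalerA mulVf ?scale1r.
Qed.

Lemma equiv_circ_trans n (C D E : circuit n) :
  equiv_circ C D -> equiv_circ D E -> equiv_circ C E.
Proof.
move=> [z [norm_z eqCD]] [w [norm_w eqDE]].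
by exists (z * w); rewrite normrM norm_z norm_w mulr1 eqCD eqDE scalerA.
Qed.

Section CnotCircuits.
Variable n : nat.

Definition cnot_bits (a b : 'I_n) (v : bitvec n) : bitvec n :=
  [ffun k => if k == b then v b (+) v a else v k].

Lemma gate_mx_CNOT (a b : 'I_n) : gate_mx (CNOT a b) = basis_mx (cnot_bits a b).
Proof.
apply/matrixP=> r c; rewrite !mxE /=.
set P := [forall k, _].
suff -> : P = (bits r == cnot_bits a b (bits c)) by case: eqP.
apply/forallP/eqP => [eq_rc | eq_rc k].
- by apply/ffunP=> k; rewrite !ffunE; apply/eqP/eq_rc.
- by have /ffunP/(_ k) := eq_rc; rewrite !ffunE => ->.
Qed.

Definition is_cnot (g : gate n) : bool := if g is CNOT _ _ then true else false.

(* The identity on non-CNOT gates, which do not permute basis states;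
   only CNOT circuits are interpreted through circuit_bits. *)
Definition gate_bits (g : gate n) : bitvec n -> bitvec n :=
  if g is CNOT a b then cnot_bits a b else id.

Definition circuit_bits (C : circuit n) (v : bitvec n) : bitvec n :=
  foldl (fun v g => gate_bits g v) v C.

Lemma circuit_mx_cnot (C : circuit n) : all is_cnot C ->
  circuit_mx C = basis_mx (circuit_bits C).
Proof.
move=> cnot_C; rewrite /circuit_mx -basis_mx_id.
rewrite -[circuit_bits C]/(circuit_bits C \o id).
elim: C cnot_C id => [|g C IH] //= /andP[cnot_g cnot_C] F.
by case: g cnot_g => // a b _; rewrite gate_mx_CNOT basis_mxM IH.
Qed.

End CnotCircuits.

Definition pad T L (s : seq T) : L.-tuple (option T) := [tuple onth s i | i < L].

Lemma pad_inj T L (s1 s2 : seq T) : (size s1 <= L)%N -> (size s2 <= L)%N ->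
  pad L s1 = pad L s2 -> s1 = s2.
Proof.
move=> le_s1 le_s2 eq_pad; apply: eq_from_onth_le => i lt_i.
have lt_iL : (i < L)%N by rewrite (leq_trans lt_i) // geq_max le_s1.
by have := congr1 (fun t => tnth t (Ordinal lt_iL)) eq_pad; rewrite !tnth_mktuple.
Qed.

Section Counting.
Variable n : nat.

Definition gate_code (g : gate n) : 'I_n * 'I_n + ('I_n + 'I_n) :=
  match g with
  | CNOT a b => inl (a, b)
  | Had a => inr (inl a)
  | Phase a => inr (inr a)
  end.

Lemma gate_code_inj : injective gate_code.
Proof. by case=> [a b|a|a] [c d|c|c] //= [] -> //= ->. Qed.

Lemma card_circuits_le (A : finType) (f : A -> circuit n) L :
  injective f -> (forall x, size (f x) <= L)%N -> (#|A| <= n.+1 ^ (2 * L))%N.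
Proof.
move=> inj_f size_f.
have code_inj : injective (fun x => pad L (map gate_code (f x))).
  move=> x y /pad_inj; rewrite !size_map => /(_ (size_f x) (size_f y)).
  by move/(inj_map gate_code_inj)/inj_f.
apply: leq_trans (leq_card _ code_inj) _.
rewrite card_tuple card_option card_sum card_prod card_sum !card_ord.
suff -> : (n * n + (n + n)).+1 = (n.+1 ^ 2)%N by rewrite expnM.
by nia.
Qed.

(* A pigeonhole argument: if every circuit C x had an equivalent circuit with
   (n+1)^(2 size) < #|A|, those short circuits would form an injective family. *)
Lemma exists_incompressible (A : finType) (C : A -> circuit n) :
  (0 < #|A|)%N -> (forall x y, equiv_circ (C x) (C y) -> x = y) ->
  exists x, forall D, equiv_circ (C x) D -> (#|A| <= n.+1 ^ (2 * size D))%N.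
Proof.
move=> A_gt0 C_inj; apply: NNPP => /not_ex_all_not all_short.
have /choice[f f_short] : forall x, exists D,
    equiv_circ (C x) D /\ (n.+1 ^ (2 * size D) < #|A|)%N.
  move=> x; apply: NNPP => no_short; apply: (all_short x) => D equiv_D.
  by rewrite leqNgt; apply/negP => lt_D; apply: no_short; exists D.
have f_inj : injective f.
  move=> x y eq_f; apply: C_inj; apply: equiv_circ_trans (proj1 (f_short x)) _.
  by rewrite eq_f; apply/equiv_circ_sym/(proj1 (f_short y)).
have [x0 max_x0] := bigop.eq_bigmax (fun x => size (f x)) A_gt0.
have := card_circuits_le f_inj (@bigop.leq_bigmax _ (fun x => size (f x))).
by rewrite max_x0 leqNgt (proj2 (f_short x0)).
Qed.

End Counting.

Section BipartiteCircuits.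
Variables n m : nat.
Hypothesis le_mm_n : (m + m <= n)%N.

Definition xq (i : 'I_m) : 'I_n := widen_ord le_mm_n (lshift m i).
Definition yq (j : 'I_m) : 'I_n := widen_ord le_mm_n (rshift m j).

Lemma eq_xq_yq i j : (xq i == yq j) = false.
Proof. by rewrite -val_eqE /= -[_ == _]/(lshift m i == rshift m j) eq_lrshift. Qed.

Lemma xq_inj : injective xq.
Proof. by move=> i j /(congr1 val) /= /ord_inj. Qed.

Lemma yq_inj : injective yq.
Proof. by move=> i j /(congr1 val) /= /addnI/ord_inj. Qed.

Definition bipartite_circuit (B : {ffun 'I_m * 'I_m -> bool}) : circuit n :=
  [seq CNOT (xq p.1) (yq p.2) | p <- enum [pred p | B p]].

Lemma bipartite_circuit_wf B : circuit_wf (bipartite_circuit B).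
Proof. by rewrite /circuit_wf all_map; apply/allP=> p _ /=; rewrite eq_xq_yq. Qed.

Lemma circuit_bits_cnot_layer (s : seq ('I_m * 'I_m)) v j :
  circuit_bits [seq CNOT (xq p.1) (yq p.2) | p <- s] v (yq j)
  = v (yq j) (+) odd (count (fun p => (p.2 == j) && v (xq p.1)) s).
Proof.
elim: s v => [|p s IH] v /=; first by rewrite addbF.
rewrite IH /cnot_bits !ffunE (inj_eq yq_inj).
under eq_count => q do rewrite ffunE eq_xq_yq.
by rewrite oddD; case: (eqVneq j p.2) => [->|_]; rewrite /= ?oddb ?addbA.
Qed.

Lemma circuit_bits_bipartite B i j :
  circuit_bits (bipartite_circuit B) [ffun k => k == xq i] (yq j) = B (i, j).
Proof.
rewrite circuit_bits_cnot_layer ffunE eq_sym eq_xq_yq /=.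
under eq_count => p do rewrite ffunE (inj_eq xq_inj) andbC -xpair_eqE.
by rewrite count_uniq_mem ?enum_uniq // mem_enum oddb.
Qed.

Lemma bipartite_circuit_equiv_inj B1 B2 :
  equiv_circ (bipartite_circuit B1) (bipartite_circuit B2) -> B1 = B2.
Proof.
have cnot_B B : all (@is_cnot n) (bipartite_circuit B) by rewrite all_map; apply/allP.
move=> [z [_]]; rewrite !circuit_mx_cnot // => /basis_mx_scale_inj eq_bits.
by apply/ffunP=> -[i j]; rewrite -!circuit_bits_bipartite eq_bits.
Qed.

Lemma exists_hard_bipartite_circuit : exists B, forall D,
  equiv_circ (bipartite_circuit B) D -> (2 ^ (m * m) <= n.+1 ^ (2 * size D))%N.
Proof.
have [|B hard_B] := exists_incompressible _ bipartite_circuit_equiv_inj.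
  by rewrite card_ffun card_bool expn_gt0.
by exists B; rewrite card_ffun card_bool card_prod card_ord in hard_B.
Qed.

End BipartiteCircuits.

Lemma leq_mul_trunc_log n a b :
  (2 ^ a <= n.+1 ^ b)%N -> (a <= (trunc_log 2 n).+1 * b)%N.
Proof.
move=> le_ab; rewrite -(@leq_exp2l 2) // expnM (leq_trans le_ab) //.
by case: b {le_ab} => // b; rewrite leq_exp2r // trunc_log_ltn.
Qed.

Theorem mainTheorem11 :
  exists (c : rat) (N : nat), 0 < c /\ (2 <= N)%N /\
    forall n : nat, (N <= n)%N ->
      exists C : circuit n, circuit_wf C /\
        forall D : circuit n, circuit_wf D -> equiv_circ C D ->
          c * (n ^ 2)%:R <= (size D)%:R * (trunc_log 2 n)%:R.
Proof.
exists (1 / 36), 2%N; split; first by lra.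
split=> // n le_2n.
have le_mm_n : (n %/ 2 + n %/ 2 <= n)%N by lia.
have [B hard_B] := exists_hard_bipartite_circuit le_mm_n.
exists (bipartite_circuit le_mm_n B); split=> [|D _]; first exact: bipartite_circuit_wf.
move/hard_B/leq_mul_trunc_log => le_half_sq.
have log_gt0 : (0 < trunc_log 2 n)%N by rewrite trunc_log_gt0.
have : (n ^ 2 <= 36 * (size D * trunc_log 2 n))%N by nia.
by rewrite -(ler_nat rat) !natrM => ?; lra.
Qed.
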